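(* Let $r$ be even with $2\le r\le n$, let $\mathbf{x}_1,\ldots,\mathbf{x}_r\in\mathbb{F}_2^n$ be linearly independent, and let $A\in\mathrm{SGL}_n(\mathbb{F}_2)$ satisfy $\mathbf{x}_i^{\top}A^{-1}\mathbf{x}_j=1$ for all $i,j\le r$. Then there exist $\mathbf{x}_{r+1}\in\mathbb{F}_2^n$ and $s\in\{1,\ldots,r\}$ such that $\mathbf{x}_s^{\top}A^{-1}\mathbf{x}_{r+1}=1$ and $\mathbf{x}_t^{\top}A^{-1}\mathbf{x}_{r+1}=0$ for all $t\in\{1,\ldots,r+1\}\setminus\{s\}$.
   Context: $\mathrm{SGL}_n(\mathbb{F}_2)$ is the set of invertible symmetric $n\times n$ matrices over the binary field $\mathbb{F}_2$. *)

From HB Require Import structures.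
From mathcomp Require Import all_boot all_order all_algebra.
Set Implicit Arguments. Unset Strict Implicit. Unset Printing Implicit Defensive.
Import GRing.Theory.
Local Open Scope ring_scope.

Definition SGL (n : nat) (A : 'M['F_2]_n) : Prop := A^T = A /\ A \in unitmx.

Definition bform (n : nat) (A : 'M['F_2]_n) (x y : 'cV['F_2]_n) : 'F_2 :=
  ((x^T *m invmx A *m y) 0 0).

From HB Require Import structures.
From mathcomp Require Import all_boot all_order all_algebra.

Set Implicit Arguments.
Unset Strict Implicit.
Unset Printing Implicit Defensive.

Import GRing.Theory.
Local Open Scope ring_scope.

(* Since A^-1 is invertible and the x_i are independent, there is a dual
   family y_1, ..., y_r with x_i^T A^-1 y_s = [i = s].  Over F_2 the map
   q(v) = v^T A^-1 v is additive because A is symmetric.  If some y_s has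
   q(y_s) = 0 it is the required vector.  Otherwise every q(y_s) = 1, and
   w = x_1 + sum_s y_s is orthogonal to every x_i (1 + 1 = 0) with
   q(w) = 1 + r = 1 since r is even; then y_1 + w works. *)

Section DualFamily.

Variables (F : fieldType) (n r : nat) (B : 'M[F]_n) (x : 'I_r -> 'cV[F]_n).
Hypotheses (B_unit : B \in unitmx) (x_free : free [seq x i | i : 'I_r]).

Lemma row_free_form_rows : row_free (\matrix_i ((x i)^T *m B)).
Proof.
have /freeP x_indep : free [tuple x i | i < r].
  by move: x_free; rewrite /= /image_mem enumT.
apply/inj_row_free => v.
rewrite mulmx_sum_row.
under eq_bigr do rewrite rowK scalemxAl -[_ *: _^T]linearZ.
rewrite -mulmx_suml -[\sum_i _^T]linear_sum => /(congr1 (mulmx^~ (invmx B))).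
rewrite mulmxK // mul0mx => /(congr1 trmx); rewrite trmxK trmx0 => comb0.
apply/rowP => i; rewrite mxE; apply: x_indep i.
by under eq_bigr do rewrite -tnth_nth tnth_mktuple.
Qed.

Lemma dual_family :
  exists y : 'I_r -> 'cV[F]_n, forall i s, ((x i)^T *m B *m y s) 0 0 = (i == s)%:R.
Proof.
case/row_freeP: row_free_form_rows => N XN1; exists (fun s => col s N) => i s.
rewrite -(rowK (fun i => (x i)^T *m B) i) -row_mul mxE.
by rewrite colE mulmxA XN1 mul1mx mxE eqxx andbT.
Qed.

End DualFamily.

Lemma F2_addrr (a : 'F_2) : a + a = 0.
Proof. exact/addrr_pchar2/pchar_Fp. Qed.

Lemma F2_neq0 (a : 'F_2) : (a != 0) = (a == 1).
Proof. by case: a => -[|[|m]] //= lt_m2; apply/eqP/val_inj. Qed.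

Lemma F2_even_nat m : ~~ odd m -> (m%:R : 'F_2) = 0.
Proof. by move=> m_even; rewrite -Fp_nat_mod // modn2 (negbTE m_even). Qed.

Section BformF2.

Variables (n : nat) (A : 'M['F_2]_n).

Lemma bformDr u v w : bform A u (v + w) = bform A u v + bform A u w.
Proof. by rewrite /bform mulmxDr mxE. Qed.

Lemma bformDl u v w : bform A (u + v) w = bform A u w + bform A v w.
Proof. by rewrite /bform linearD !mulmxDl mxE. Qed.

Lemma bform0r u : bform A u 0 = 0.
Proof. by rewrite /bform mulmx0 mxE. Qed.

Lemma bform_sumr I (s : seq I) (P : pred I) u (v : I -> 'cV_n) :
  bform A u (\sum_(i <- s | P i) v i) = \sum_(i <- s | P i) bform A u (v i).
Proof. exact: (big_morph _ (bformDr u) (bform0r u)). Qed.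

Hypothesis A_sym : A^T = A.

Lemma bformC u v : bform A u v = bform A v u.
Proof.
rewrite /bform -[in LHS](trmxK (_ *m v)) [in LHS]mxE !trmx_mul trmxK.
by rewrite trmx_inv A_sym mulmxA.
Qed.

Lemma bform_diagD u v : bform A (u + v) (u + v) = bform A u u + bform A v v.
Proof.
rewrite bformDl !bformDr (bformC v u) -addrA (addrA (bform A u v)).
by rewrite F2_addrr add0r.
Qed.

Lemma bform_diag_sum I (s : seq I) (P : pred I) (v : I -> 'cV_n) :
  bform A (\sum_(i <- s | P i) v i) (\sum_(i <- s | P i) v i) =
  \sum_(i <- s | P i) bform A (v i) (v i).
Proof. exact: (big_morph (fun u => bform A u u) bform_diagD (bform0r 0)). Qed.

End BformF2.

Section IsotropicDualVector.

Variables (n r : nat) (A : 'M['F_2]_n) (x y : 'I_r -> 'cV['F_2]_n).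
Hypotheses (A_sym : A^T = A) (r_even : ~~ odd r).
Hypothesis x_ones : forall i j, bform A (x i) (x j) = 1.
Hypothesis xy_dual : forall i s, bform A (x i) (y s) = (i == s)%:R.
Variable s0 : 'I_r.

Lemma dual_sum_orthogonal i : bform A (x i) (x s0 + \sum_s y s) = 0.
Proof.
rewrite bformDr x_ones bform_sumr (bigD1 i) //= xy_dual eqxx big1 ?addr0.
  exact: F2_addrr.
by move=> j /negbTE ji; rewrite xy_dual eq_sym ji.
Qed.

Lemma dual_sum_anisotropic :
  (forall s, bform A (y s) (y s) = 1) ->
  bform A (x s0 + \sum_s y s) (x s0 + \sum_s y s) = 1.
Proof.
move=> y_ones; rewrite bform_diagD // bform_diag_sum //.
under eq_bigr do rewrite y_ones.
by rewrite sumr_const card_ord F2_even_nat // addr0 x_ones.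
Qed.

Lemma exists_isotropic_dual_vector :
  exists z s, (forall t, bform A (x t) z = (t == s)%:R) /\ bform A z z = 0.
Proof.
have [/existsP [s /eqP y_iso] | /existsPn y_aniso] :=
  boolP [exists s, bform A (y s) (y s) == 0].
  by exists (y s), s.
have y_ones s : bform A (y s) (y s) = 1 by apply/eqP; rewrite -F2_neq0 y_aniso.
exists (y s0 + (x s0 + \sum_s y s)), s0; split=> [t|].
  by rewrite bformDr xy_dual dual_sum_orthogonal addr0.
by rewrite bform_diagD // y_ones dual_sum_anisotropic // F2_addrr.
Qed.

End IsotropicDualVector.

Theorem lemma4p2 (n r : nat) (x : 'I_r -> 'cV['F_2]_n) (A : 'M['F_2]_n) :
  ~~ odd r -> (2 <= r)%N -> (r <= n)%N ->
  free [seq x i | i : 'I_r] ->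
  SGL A ->
  (forall i j : 'I_r, bform A (x i) (x j) = 1) ->
  exists (y : 'cV['F_2]_n) (s : 'I_r),
    bform A (x s) y = 1 /\
    (forall t : 'I_r, t != s -> bform A (x t) y = 0) /\
    bform A y y = 0.
Proof.
move=> r_even r_ge2 _ x_free [A_sym A_unit] x_ones.
have A_inv_unit : invmx A \in unitmx by rewrite unitmx_inv.
have [y xy_dual] := dual_family A_inv_unit x_free.
pose s0 : 'I_r := Ordinal (leq_trans (isT : 0 < 2)%N r_ge2).
have [z [s [xz_dual z_iso]]] :=
  exists_isotropic_dual_vector A_sym r_even x_ones xy_dual s0.
exists z, s; rewrite xz_dual eqxx; split=> //; split=> // t /negbTE ts.
by rewrite xz_dual ts.
Qed.
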